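(* Let $G=(V,E)$ be a finite graph and $B \subset U \subset V$. Assume the random permutation on $(V,E)$ has cycle length bounded by a random variable $\xi$ with $\mathbb E(\xi) < 2$. Let $C>0$ and $\kappa>0$ be constants such that the total offspring $W$ of a Galton–Watson process with initial population $1$ and offspring distribution $\xi-1$ satisfies $\mathbb P(W > n) \leq C e^{-2\kappa n}$ for all $n$. Then for any $\mathcal F_B$-measurable function $f$, $$|\mathbb E_V(f) - \mathbb E_U(f)| \leq 2 C \|f\|_{\infty} \sum_{x \in V \setminus U} e^{-\kappa d(x, B)},$$ where $d$ is the graph distance on $G$.
   Context: For $U\subset V$, $\mathcal S_U$ is the set of bijections $\pi:U\to U$ with $\pi(x)=x$ or $\{x,\pi(x)\}\in E$; $\mathbb P_U(\pi)=e^{-\alpha\sum_{x\in U}\mathbb 1\{\pi(x)\neq x\}}/Z(U)$, $\mathbb E_U$ its expectation, where a function on $\mathcal S_V$ is evaluated at $\pi\oplus\mathrm{id}$ (extension by the identity outside $U$). $\mathcal F_B$ is the $\sigma$-algebra on $\mathcal S_V$ generated by the values $\pi(x),\pi^{-1}(x)$, $x\in B$. Cycle length bounded by $\xi$ on $(V,E)$: for all $\ell\ge1$, $\sup_{U\subset V\text{ finite}}\sup_{x\in U}\mathbb P_U(|\gamma_x|\ge\ell)\le\mathbb P(\xi\ge\ell)$, $|\gamma_x|$ the number of vertices of the cycle of $\pi$ containing $x$. *)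

From HB Require Import structures.
From mathcomp Require Import all_boot all_order all_algebra all_fingroup.
From mathcomp Require Import boolp classical_sets reals ereal sequences exp.

Set Implicit Arguments.
Unset Strict Implicit.
Unset Printing Implicit Defensive.

Import Order.TTheory GRing.Theory Num.Theory.
Local Open Scope ring_scope.

Section RandomPermutation.
Variables (R : realType) (T : finType) (e : rel T) (alpha : R).

(* pi belongs to S_U : pi is a bijection of T fixing every point outside U
   (i.e. a bijection of U extended by the identity), and pi x = x or
   {x, pi x} is an edge. *)
Definition admissible (U : {set T}) (pi : {perm T}) : bool :=
  perm_on U pi && [forall x, (pi x == x) || e x (pi x)].

Definition pweight (U : {set T}) (pi : {perm T}) : R :=
  expR (- alpha * (#|[set x in U | pi x != x]|)%:R).

Definition Zpart (U : {set T}) : R :=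
  \sum_(pi : {perm T} | admissible U pi) pweight U pi.

(* E_U(f), f a function on permutations of V, evaluated at pi (+) id *)
Definition Exp (U : {set T}) (f : {perm T} -> R) : R :=
  \sum_(pi : {perm T} | admissible U pi) f pi * pweight U pi / Zpart U.

Definition Prob (U : {set T}) (A : pred {perm T}) : R :=
  Exp U (fun pi => (A pi)%:R).

(* f is F_B-measurable: on S_V, f only depends on pi(x), pi^{-1}(x), x in B *)
Definition FB_measurable (B : {set T}) (f : {perm T} -> R) : Prop :=
  forall pi sigma : {perm T},
    admissible [set: T] pi -> admissible [set: T] sigma ->
    (forall x, x \in B -> pi x = sigma x /\ (pi^-1)%g x = (sigma^-1)%g x) ->
    f pi = f sigma.

Definition supnorm (f : {perm T} -> R) : R :=
  \big[Num.max/0]_(pi : {perm T} | admissible [set: T] pi) `|f pi|.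

Definition reach (B : {set T}) (x : T) (n : nat) : bool :=
  [exists s : n.-tuple T, path e x s && (last x s \in B)].

(* exp(-kappa * d(x,B)), with the convention e^{-kappa * oo} = 0 when
   d(x,B) = oo (no path from x to B). *)
Definition decay (kappa : R) (B : {set T}) (x : T) : R :=
  match pselect (exists n, reach B x n) with
  | left h => expR (- kappa * (ex_minn h)%:R)
  | right _ => 0
  end.

End RandomPermutation.

Section GW.
Variables (R : realType) (q : nat -> R).

(* law of the sum of i i.i.d. copies with law q: conv i j = P(X_1+..+X_i = j) *)
Fixpoint conv (i : nat) (j : nat) : R :=
  match i with
  | 0 => (j == 0)%:R
  | i'.+1 => \sum_(a < j.+1) q a * conv i' (j - a)
  end.

(* gw_joint m z s = P(Z_m = z, Z_0 + ... + Z_m = s) for the Galton-Watson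
   process with Z_0 = 1 and offspring law q. *)
Fixpoint gw_joint (m : nat) (z s : nat) : R :=
  match m with
  | 0 => ((z == 1%N) && (s == 1%N))%:R
  | m'.+1 => \sum_(z0 < s.+1) \sum_(s0 < s.+1)
               (if (s0 + z == s)%N then gw_joint m' z0 s0 * conv z0 z else 0)
  end.

(* P(Z_0 + ... + Z_m > n) *)
Definition gw_partial_total_gt (m n : nat) : R :=
  1 - \sum_(z < n.+1) \sum_(s < n.+1) gw_joint m z s.

End GW.

(* Removing a single vertex y from the domain W changes E_W(f) by at most
   2 |f|_oo times the probability that the cluster explored from y reaches B.
   The exploration reveals the cycles through the explored vertices one at a
   time: given the cycle O of a vertex, the rest of the permutation is the random
   permutation on W minus O (spatial Markov property), so as long as no revealed
   cycle meets B an F_B-measurable f cannot tell the two domains apart. Cycle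
   lengths are stochastically dominated by xi, so the explored cluster is
   dominated by the total progeny of a Galton-Watson process with offspring law
   xi - 1, while a cluster joining y to B has more than d(y, B) vertices; this
   gives the factor C e^{-2 kappa d(y, B)} <= C e^{-kappa d(y, B)}. Adding the
   vertices of V \ U one at a time yields the bound. *)

From HB Require Import structures.
From mathcomp Require Import all_boot all_order all_algebra all_fingroup.
From mathcomp Require Import boolp classical_sets reals ereal sequences exp.
From mathcomp Require Import zify ring lra.

Set Implicit Arguments.
Unset Strict Implicit.
Unset Printing Implicit Defensive.

Import Order.TTheory GRing.Theory Num.Theory.
Local Open Scope ring_scope.

Section NatSums.
Variable R : realFieldType.

Lemma ler_sum_ord_widen n m (F : nat -> R) : (n <= m)%N -> (forall i, 0 <= F i) ->
  \sum_(i < n) F i <= \sum_(i < m) F i.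
Proof.
move=> nm F0; rewrite (big_ord_widen m F nm).
by rewrite [X in _ <= X](bigID (fun i : 'I_m => (i < n)%N)) /= lerDl sumr_ge0.
Qed.

Lemma sum_ord_indicator n j (F : nat -> R) :
  \sum_(i < n) (i == j :> nat)%:R * F i = (j < n)%:R * F j.
Proof.
case: (ltnP j n) => jn.
  rewrite (bigD1 (Ordinal jn)) //= eqxx mul1r big1 ?addr0 // => i.
  by rewrite -(inj_eq val_inj) /= => /negbTE ->; rewrite mul0r.
rewrite mul0r big1 // => i _.
by rewrite (ltn_eqF (leq_trans (ltn_ord i) jn)) mul0r.
Qed.

Lemma sum_ord_indicator1 n j : \sum_(i < n) (i == j :> nat)%:R = (j < n)%:R :> R.
Proof.
rewrite -[RHS]mulr1 -(sum_ord_indicator n j (fun=> 1)).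
by apply: eq_bigr => i _ /=; rewrite mulr1.
Qed.

Lemma sum_ord_indicator_le n j (F : nat -> R) : 0 <= F j ->
  \sum_(i < n) (i == j :> nat)%:R * F i <= F j.
Proof. by move=> Fj; rewrite sum_ord_indicator; case: (j < n)%N; rewrite ?mul1r ?mul0r. Qed.

Lemma sum_antidiag_le N (F : nat -> nat -> R) : (forall a b, 0 <= F a b) ->
  \sum_(y < N) \sum_(a < y.+1) F a (y - a)%N <= \sum_(a < N) \sum_(b < N) F a b.
Proof.
elim: N F => [|N IH] F F0; first by rewrite !big_ord0.
have -> : \sum_(y < N.+1) \sum_(a < y.+1) F a (y - a)%N =
    \sum_(y < N.+1) F 0%N y + \sum_(y < N) \sum_(a < y.+1) F a.+1 (y - a)%N.
  under eq_bigr => y _ do rewrite big_ord_recl subn0.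
  rewrite big_split /= [X in _ + X]big_ord_recl big_ord0 add0r.
  by congr (_ + _); apply: eq_bigr => y _; apply: eq_bigr => a _; rewrite subSS.
rewrite [X in _ <= X]big_ord_recl lerD2l.
apply: le_trans (IH (fun a b => F a.+1 b) (fun a b => F0 _ _)) _.
by apply: ler_sum => a _; rewrite big_ord_recr /= lerDl.
Qed.

Lemma sum_shift_le N z (A G : nat -> R) : (forall i, 0 <= A i) -> (forall i, 0 <= G i) ->
  \sum_(s < N) (\sum_(s0 < s.+1) (if (s0 + z == s)%N then A s0 else 0)) * G s
  <= \sum_(s0 < N) A s0 * G (s0 + z)%N.
Proof.
move=> A0 G0; apply: le_trans (_ : \sum_(s < N) \sum_(s0 < N)
    (if (s0 + z == s)%N then A s0 else 0) * G s <= _).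
  apply: ler_sum => s _; rewrite mulr_suml.
  apply: (@ler_sum_ord_widen s.+1 N (fun s0 => (if (s0 + z == s)%N then A s0 else 0) * G s)) => // i.
  by case: eqP; rewrite ?mul0r // mulr_ge0.
rewrite exchange_big /=; apply: ler_sum => s0 _.
apply: le_trans (_ : \sum_(s < N) ((s : nat) == (s0 + z)%N)%:R * (A s0 * G s) <= _).
  by apply: ler_sum => s _; rewrite eq_sym; case: eqP; rewrite ?mul0r ?mul1r.
by apply: (@sum_ord_indicator_le N (s0 + z)%N (fun s => A s0 * G s)); rewrite mulr_ge0.
Qed.

Lemma abel_summation (u phi : nat -> R) N :
  \sum_(y < N.+1) u y * phi y =
  \sum_(l < N) (\sum_(y < l.+1) u y) * (phi l - phi l.+1) + (\sum_(y < N.+1) u y) * phi N.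
Proof.
elim: N => [|N IH]; first by rewrite big_ord0 !big_ord1 add0r.
rewrite big_ord_recr IH /= [in RHS]big_ord_recr /= [X in _ = _ + X * _]big_ord_recr /=.
ring.
Qed.

Lemma ler_sum_antitone (u v phi : nat -> R) N :
  (forall l, \sum_(y < l.+1) u y <= \sum_(y < l.+1) v y) ->
  (forall y, 0 <= phi y) -> (forall y, phi y.+1 <= phi y) ->
  \sum_(y < N.+1) u y * phi y <= \sum_(y < N.+1) v y * phi y.
Proof.
move=> uv phi0 phiS; rewrite !abel_summation.
apply: lerD; last exact: ler_wpM2r.
by apply: ler_sum => l _; apply: ler_wpM2r; rewrite ?subr_ge0.
Qed.

End NatSums.

Section GaltonWatson.
Variables (R : realType) (q : nat -> R).
Hypothesis q_ge0 : forall a, 0 <= q a.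

Lemma conv_ge0 r y : 0 <= conv q r y.
Proof.
elim: r y => [|r IH] y /=; first by rewrite ler0n.
by apply: sumr_ge0 => a _; rewrite mulr_ge0.
Qed.

Lemma gw_joint_ge0 m z s : 0 <= gw_joint q m z s.
Proof.
elim: m z s => [|m IH] z s /=; first by rewrite ler0n.
apply: sumr_ge0 => z0 _; apply: sumr_ge0 => s0 _.
by case: eqP => _ //; rewrite mulr_ge0 ?conv_ge0.
Qed.

Hypothesis q_le1 : forall N, \sum_(a < N) q a <= 1.
Variable D : nat.

Definition gw_weight (G : nat -> nat -> R) :=
  [/\ forall z s, 0 <= G z s, forall z s, G z s <= 1,
      forall z z' s s', (z <= z')%N -> (s <= s')%N -> G z' s' <= G z s
    & forall z s, (D < s)%N -> G z s = 0].

(* E[G (n + Y) (s + Y)] with Y the total offspring of r individuals, restricted to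
   Y <= D (which G ignores anyway once s + Y > D). *)
Definition offspring_avg (G : nat -> nat -> R) r n s :=
  \sum_(y < D.+1) conv q r y * G (n + y)%N (s + y)%N.

(* small_total k z s is the probability that a Galton-Watson process with z
   individuals in its current generation and total progeny s so far keeps its
   total progeny at most D during the next k generations. *)
Fixpoint small_total (k : nat) : nat -> nat -> R :=
  match k with
  | 0 => fun z s => (s <= D)%:R
  | k'.+1 => fun z s => (s <= D)%:R * offspring_avg (small_total k') z 0 s
  end.

Definition small_total_avg k := offspring_avg (small_total k).

Section OffspringAvg.
Variable G : nat -> nat -> R.
Hypothesis wG : gw_weight G.

Lemma offspring_avg_ge0 r n s : 0 <= offspring_avg G r n s.
Proof. by case: wG => G0 _ _ _; apply: sumr_ge0 => y _; rewrite mulr_ge0 ?conv_ge0. Qed.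

Lemma offspring_avg0 n s : offspring_avg G 0 n s = G n s.
Proof.
rewrite /offspring_avg big_ord_recl /= mul1r !addn0 big1 ?addr0 // => y _.
by rewrite mul0r.
Qed.

Lemma offspring_avgS_le r n s :
  offspring_avg G r.+1 n s <= \sum_(a < D.+1) q a * offspring_avg G r (n + a)%N (s + a)%N.
Proof.
case: wG => G0 _ _ _; rewrite /offspring_avg /=.
pose F a b := q a * conv q r b * G (n + a + b)%N (s + a + b)%N.
have -> : \sum_(y < D.+1) (\sum_(a < y.+1) q a * conv q r (y - a)) * G (n + y)%N (s + y)%N
    = \sum_(y < D.+1) \sum_(a < y.+1) F a (y - a)%N.
  apply: eq_bigr => y _; rewrite mulr_suml; apply: eq_bigr => a _.
  by rewrite /F -!addnA subnKC // -ltnS.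
have F0 a b : 0 <= F a b by rewrite !mulr_ge0 ?conv_ge0.
apply: le_trans (@sum_antidiag_le _ D.+1 F F0) _.
apply: ler_sum => a _; rewrite mulr_sumr; apply: ler_sum => b _.
by rewrite /F mulrA.
Qed.

Lemma offspring_avg_eq0 r n s : (D < s)%N -> offspring_avg G r n s = 0.
Proof.
case: wG => _ _ _ G_eq0 Ds; rewrite /offspring_avg big1 // => y _.
by rewrite G_eq0 ?mulr0 // (leq_trans Ds) // leq_addr.
Qed.

Lemma offspring_avg_le1 r n s : offspring_avg G r n s <= 1.
Proof.
case: wG => _ G1 _ _.
elim: r n s => [|r IH] n s; first by rewrite offspring_avg0.
apply: le_trans (offspring_avgS_le _ _ _) (le_trans _ (q_le1 D.+1)).
by apply: ler_sum => a _; apply: ler_piMr.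
Qed.

Lemma offspring_avg_le_ns r n n' s s' : (n <= n')%N -> (s <= s')%N ->
  offspring_avg G r n' s' <= offspring_avg G r n s.
Proof.
case: wG => _ _ G_anti _ nn ss; apply: ler_sum => y _.
by apply: ler_wpM2l; [exact: conv_ge0 | apply: G_anti; rewrite leq_add2r].
Qed.

Lemma offspring_avg_le_r r r' n s : (r <= r')%N ->
  offspring_avg G r' n s <= offspring_avg G r n s.
Proof.
move=> /subnK <-; elim: (r' - r)%N => [|k IH] //=.
apply: le_trans IH; rewrite addSn; apply: le_trans (offspring_avgS_le _ _ _) _.
apply: le_trans (_ : \sum_(a < D.+1) q a * offspring_avg G (k + r) n s <= _).
  by apply: ler_sum => a _; apply: ler_wpM2l; rewrite ?offspring_avg_le_ns ?leq_addr.
by rewrite -mulr_suml ler_piMl ?offspring_avg_ge0.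
Qed.

Lemma offspring_avg_le r r' n n' s s' : (r <= r')%N -> (n <= n')%N -> (s <= s')%N ->
  offspring_avg G r' n' s' <= offspring_avg G r n s.
Proof.
by move=> rr nn ss; apply: le_trans (offspring_avg_le_r _ _ rr); exact: offspring_avg_le_ns.
Qed.

Lemma gw_weight_step : gw_weight (fun z s => (s <= D)%:R * offspring_avg G z 0 s).
Proof.
split=> [z s|z s|z z' s s' zz ss|z s Ds].
- by rewrite mulr_ge0 ?ler0n ?offspring_avg_ge0.
- by case: (s <= D)%N; rewrite ?mul1r ?mul0r ?offspring_avg_le1.
- case: (leqP s' D) => s'D; last by rewrite mul0r mulr_ge0 ?ler0n ?offspring_avg_ge0.
  by rewrite (leq_trans ss s'D) !mul1r offspring_avg_le.
- by rewrite leqNgt Ds mul0r.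
Qed.

End OffspringAvg.

Lemma gw_weight_small_total k : gw_weight (small_total k).
Proof.
elim: k => [|k IH] /=; last exact: gw_weight_step.
split=> [z s|z s|z z' s s' _ ss|z s Ds]; rewrite ?ler0n //.
- by case: (s <= D)%N.
- by case: (leqP s' D) => s'D; rewrite ?(leq_trans ss s'D) ?ler0n.
- by rewrite leqNgt Ds.
Qed.

Lemma small_total_avg_ge0 k r n s : 0 <= small_total_avg k r n s.
Proof. exact/offspring_avg_ge0/gw_weight_small_total. Qed.

Lemma small_total_avg_le1 k r n s : small_total_avg k r n s <= 1.
Proof. exact/offspring_avg_le1/gw_weight_small_total. Qed.

Lemma small_total_avg_le k r r' n n' s s' : (r <= r')%N -> (n <= n')%N -> (s <= s')%N ->
  small_total_avg k r' n' s' <= small_total_avg k r n s.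
Proof. exact/offspring_avg_le/gw_weight_small_total. Qed.

Lemma small_total_avgS_le k r n s : small_total_avg k r.+1 n s <=
  \sum_(a < D.+1) q a * small_total_avg k r (n + a)%N (s + a)%N.
Proof. exact/offspring_avgS_le/gw_weight_small_total. Qed.

Lemma small_total_avg_eq0 k r n s : (D < s)%N -> small_total_avg k r n s = 0.
Proof. exact/offspring_avg_eq0/gw_weight_small_total. Qed.

Lemma small_total_avgS0 k n s :
  small_total_avg k.+1 0 n s = (s <= D)%:R * small_total_avg k n 0 s.
Proof. by rewrite /small_total_avg offspring_avg0 //; exact: gw_weight_small_total. Qed.

Lemma gw_joint_step m G : gw_weight G ->
  \sum_(z < D.+1) \sum_(s < D.+1) gw_joint q m.+1 z s * G z s <=
  \sum_(z0 < D.+1) \sum_(s0 < D.+1) gw_joint q m z0 s0 * offspring_avg G z0 0 s0.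
Proof.
move=> wG; have [G0 _ _ _] := wG.
pose A z0 z s0 := gw_joint q m z0 s0 * conv q z0 z.
pose H z s z0 := (\sum_(s0 < s.+1) (if (s0 + z == s)%N then A z0 z s0 else 0)) * G z s.
apply: le_trans (_ : \sum_(z < D.+1) \sum_(s < D.+1) \sum_(z0 < D.+1) H z s z0 <= _).
  apply: ler_sum => z _; apply: ler_sum => s _ /=; rewrite mulr_suml.
  apply: (@ler_sum_ord_widen _ s.+1 D.+1 (H z s)) => // z0.
  rewrite mulr_ge0 // sumr_ge0 // => s0 _.
  by case: eqP => _ //; rewrite mulr_ge0 ?conv_ge0 ?gw_joint_ge0.
apply: le_trans (_ : \sum_(z < D.+1) \sum_(z0 < D.+1) \sum_(s0 < D.+1)
    A z0 z s0 * G z (s0 + z)%N <= _).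
  apply: ler_sum => z _; rewrite exchange_big /=; apply: ler_sum => z0 _.
  by apply: sum_shift_le => i; rewrite ?mulr_ge0 ?conv_ge0 ?gw_joint_ge0.
rewrite exchange_big /=; apply: ler_sum => z0 _.
rewrite exchange_big /=; apply: ler_sum => s0 _.
by rewrite /offspring_avg mulr_sumr; apply: ler_sum => z _; rewrite /A add0n addnC mulrA.
Qed.

Lemma gw_joint_small_total k m :
  \sum_(z < D.+1) \sum_(s < D.+1) gw_joint q (m + k) z s <=
  \sum_(z < D.+1) \sum_(s < D.+1) gw_joint q m z s * small_total k z s.
Proof.
elim: k m => [|k IH] m.
  rewrite addn0; apply: ler_sum => z _; apply: ler_sum => s _ /=.
  by rewrite -ltnS ltn_ord mulr1.
rewrite addnS -addSn; apply: le_trans (IH m.+1) _.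
apply: le_trans (gw_joint_step _ (gw_weight_small_total k)) _.
by apply: ler_sum => z _; apply: ler_sum => s _ /=; rewrite -ltnS ltn_ord mul1r.
Qed.

Lemma small_total_avg_gw_tail K :
  1 - small_total_avg K 1 0 1 <= gw_partial_total_gt q K.+1 D.
Proof.
rewrite /gw_partial_total_gt lerD2l lerN2.
have := gw_joint_small_total K.+1 0; rewrite add0n => /le_trans; apply.
pose F z := \sum_(s < D.+1) (s == 1%N :> nat)%:R * small_total K.+1 z s.
have -> : \sum_(z < D.+1) \sum_(s < D.+1) gw_joint q 0 z s * small_total K.+1 z s
    = \sum_(z < D.+1) (z == 1%N :> nat)%:R * F z.
  apply: eq_bigr => z _; rewrite mulr_sumr; apply: eq_bigr => s _ /=.
  by case: eqP; case: eqP; rewrite ?mul0r ?mul1r.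
rewrite (@sum_ord_indicator _ D.+1 1 F) /F sum_ord_indicator /=.
have := small_total_avg_ge0 K 1 0 1; rewrite ltnS.
by case: (1 <= D)%N; rewrite ?mul1r ?mul0r.
Qed.

End GaltonWatson.

Section Glue.
Variable T : finType.
Implicit Types (S W : {set T}) (p s : {perm T}).

Lemma mem_porbit_perm p x y : (p x \in porbit p y) = (x \in porbit p y).
Proof. by rewrite -!eq_porbit_mem; have := porbit_perm p 1 x; rewrite expg1 => ->. Qed.

Lemma porbit_subset W p y : perm_on W p -> y \in W -> porbit p y \subset W.
Proof.
move=> pW yW; apply/fintype.subsetP => _ /porbitP [i ->]; rewrite permX.
by elim: i => [|i IH] //=; rewrite perm_closed.
Qed.

(* The permutation acting as p on S and as s outside S; it is only meaningful
   when p stabilises S and s stabilises its complement (otherwise it is 1). *)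
Definition glue S p s : {perm T} :=
  insubd (1%g : {perm T}) [ffun x => if x \in S then p x else s x].

Lemma glueE S p s : (forall x, x \in S -> p x \in S) -> (forall x, x \notin S -> s x \notin S) ->
  forall x, glue S p s x = if x \in S then p x else s x.
Proof.
move=> pS sS x; rewrite /glue -pvalE insubdK ?ffunE //.
apply/injectiveP => y z; rewrite !ffunE.
case: (boolP (y \in S)) => yS; case: (boolP (z \in S)) => zS; try exact: perm_inj.
- by move=> yz; move: (pS _ yS) (sS _ zS); rewrite yz => ->.
- by move=> yz; move: (pS _ zS) (sS _ yS); rewrite yz => ->.
Qed.

End Glue.

Section GibbsMeasure.
Variables (R : realType) (T : finType) (e : rel T) (alpha : R).
Implicit Types (W : {set T}) (p s : {perm T}) (F : {perm T} -> R).

Definition nmoved W p := #|[set x in W | p x != x]|.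

Definition pmass W p := pweight alpha W p / Zpart e alpha W.

Lemma admissible1 W : admissible e W 1%g.
Proof. by rewrite /admissible perm_on1; apply/forallP => x; rewrite perm1 eqxx. Qed.

Lemma pweightE W p : pweight alpha W p = expR (- alpha * (nmoved W p)%:R).
Proof. by []. Qed.

Lemma pweight_gt0 W p : 0 < pweight alpha W p.
Proof. exact: expR_gt0. Qed.

Lemma Zpart_gt0 W : 0 < Zpart e alpha W.
Proof.
rewrite /Zpart (bigD1 1%g) ?admissible1 //=.
apply: (lt_le_trans (pweight_gt0 W 1%g)); rewrite lerDl.
by apply: sumr_ge0 => p _; exact/ltW/pweight_gt0.
Qed.

Lemma pmass_ge0 W p : 0 <= pmass W p.
Proof. by rewrite divr_ge0 ?ltW ?pweight_gt0 ?Zpart_gt0. Qed.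

Lemma sum_pmass W : \sum_(p | admissible e W p) pmass W p = 1.
Proof. by rewrite -mulr_suml divff // gt_eqF // Zpart_gt0. Qed.

Lemma ExpE W F : Exp e alpha W F = \sum_(p | admissible e W p) pmass W p * F p.
Proof. by apply: eq_bigr => p _; rewrite /pmass [RHS]mulrC mulrA. Qed.

Lemma admissible_subset W W' p : W \subset W' -> admissible e W p -> admissible e W' p.
Proof. by move=> sW /andP [pW pe]; apply/andP; split => //; exact: fintype.subset_trans pW sW. Qed.

Lemma admissibleT W p : admissible e W p -> admissible e [set: T] p.
Proof. exact/admissible_subset/finset.subsetT. Qed.

Lemma ler_norm_Exp W F M : (forall p, admissible e W p -> `|F p| <= M) ->
  `|Exp e alpha W F| <= M.
Proof.
move=> FM; rewrite ExpE; apply: le_trans (ler_norm_sum _ _ _) _.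
rewrite -[M]mul1r -(sum_pmass W) mulr_suml; apply: ler_sum => p pW.
by rewrite normrM ger0_norm ?pmass_ge0 // ler_wpM2l ?pmass_ge0 ?FM.
Qed.

Lemma supnorm_ge0 F : 0 <= supnorm e F.
Proof. exact: bigmax_ge_id. Qed.

Lemma ler_supnorm F p : admissible e [set: T] p -> `|F p| <= supnorm e F.
Proof. exact: le_bigmax_cond. Qed.

Lemma ler_norm_Exp_supnorm W F : `|Exp e alpha W F| <= supnorm e F.
Proof. by apply: ler_norm_Exp => p /admissibleT; apply: ler_supnorm. Qed.

Definition admissible_at W p x :=
  ((p x != x) ==> (x \in W)) && ((p x == x) || e x (p x)).

Lemma admissibleP W p : reflect (forall x, admissible_at W p x) (admissible e W p).
Proof.
apply: (iffP andP) => [[pW /forallP pe] x | ok].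
  by rewrite /admissible_at pe andbT; apply/implyP => px; apply: (fintype.subsetP pW); rewrite inE.
split; last by apply/forallP => x; case/andP: (ok x).
rewrite /perm_on; apply/fintype.subsetP => x; rewrite inE => px.
by case/andP: (ok x) => /implyP /(_ px).
Qed.

Lemma admissible_at_subset W W' p x : W \subset W' ->
  admissible_at W p x -> admissible_at W' p x.
Proof.
move=> sW /andP [/implyP pW pe]; rewrite /admissible_at pe andbT.
by apply/implyP => /pW/(fintype.subsetP sW).
Qed.

Section CycleGlue.
Variables (W : {set T}) (a : T) (p : {perm T}).
Hypotheses (aW : a \in W) (pW : admissible e W p).
Local Notation O := (porbit p a).

Lemma porbit_subW : O \subset W.
Proof. by apply: porbit_subset aW; case/andP: pW. Qed.

Lemma admissible_fix_cycle s : admissible e (W :\: O) s -> forall x, x \in O -> s x = x.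
Proof. by case/andP=> sW _ x xO; apply: out_perm sW _; rewrite inE xO. Qed.

Lemma admissible_stable_cycleC s : admissible e (W :\: O) s -> forall x, x \notin O -> s x \notin O.
Proof.
move=> sa x; apply: contra => sxO.
by rewrite -(perm_inj (admissible_fix_cycle sa sxO)).
Qed.

Lemma glue_cycleE s : admissible e (W :\: O) s ->
  forall x, glue O p s x = if x \in O then p x else s x.
Proof.
by move=> sa; apply: glueE => [x|]; [rewrite mem_porbit_perm | exact: admissible_stable_cycleC].
Qed.

Lemma glue1_cycleE x : glue O 1%g p x = if x \in O then x else p x.
Proof. by rewrite glueE => [|y|y]; rewrite ?perm1 ?mem_porbit_perm. Qed.

Lemma porbit_glue_cycle s : admissible e (W :\: O) s -> porbit (glue O p s) a = O.
Proof.
move=> sa; have iterE i : (glue O p s ^+ i)%g a = (p ^+ i)%g a.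
  elim: i => [|i IH]; first by rewrite !expg0 !perm1.
  by rewrite !expgSr !permM IH glue_cycleE // mem_porbit.
by apply/setP => y; apply/porbitP/porbitP => -[i ->]; exists i; rewrite iterE.
Qed.

Lemma admissible_glue_cycle s : admissible e (W :\: O) s -> admissible e W (glue O p s).
Proof.
move=> sa; apply/admissibleP => x; rewrite /admissible_at glue_cycleE //.
case: ifP => xO; first exact/admissibleP.
by apply: admissible_at_subset (finset.subsetDl W O) _; apply/admissibleP.
Qed.

Lemma admissible_glue1_cycle : admissible e (W :\: O) (glue O 1%g p).
Proof.
apply/admissibleP => x; rewrite /admissible_at glue1_cycleE.
case: ifP => xO; first by rewrite eqxx.
have /andP [/implyP xW ->] := admissibleP _ _ pW x.
by rewrite andbT; apply/implyP => /xW; rewrite inE xO.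
Qed.

Lemma glue_cycle_involutive s : admissible e (W :\: O) s ->
  glue O (glue O p s) (glue O 1%g p) = p /\ glue O 1%g (glue O p s) = s.
Proof.
move=> sa; split; apply/permP => x.
  rewrite glueE => [|y yO|y yO]; rewrite ?glue_cycleE ?glue1_cycleE //.
  - by case: (x \in O).
  - by rewrite yO mem_porbit_perm.
  - by rewrite (negbTE yO) mem_porbit_perm.
rewrite glueE => [|y yO|y yO]; rewrite ?perm1 ?glue_cycleE //.
- by case: (boolP (x \in O)) => [/(admissible_fix_cycle sa) ->|].
- by rewrite (negbTE yO) admissible_stable_cycleC.
Qed.

Lemma nmoved_cycle_split g : nmoved W g = (nmoved O g + nmoved (W :\: O) g)%N.
Proof.
rewrite /nmoved -(cardsID O [set x in W | g x != x]); congr (_ + _)%N; apply: eq_card => x.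
  by rewrite !inE andbC; case: (boolP (x \in O)) => // /(fintype.subsetP porbit_subW) ->.
by rewrite !inE andbA.
Qed.

Lemma pmass_glue_cycle s : admissible e (W :\: O) s ->
  pmass W p * pmass (W :\: O) s = pmass W (glue O p s) * pmass (W :\: O) (glue O 1%g p).
Proof.
move=> sa; rewrite /pmass mulrACA [RHS]mulrACA; congr (_ * _).
rewrite !pweightE -!expRD -!mulrDr -!natrD !nmoved_cycle_split.
congr (expR (_ * _%:R)).
have -> : nmoved O (glue O p s) = nmoved O p.
  by apply: eq_card => x; rewrite !inE glue_cycleE //; case: ifP.
have -> : nmoved (W :\: O) (glue O p s) = nmoved (W :\: O) s.
  by apply: eq_card => x; rewrite !inE glue_cycleE //; case: ifP.
have -> : nmoved (W :\: O) (glue O 1%g p) = nmoved (W :\: O) p.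
  by apply: eq_card => x; rewrite !inE glue1_cycleE; case: ifP; rewrite ?eqxx.
lia.
Qed.

End CycleGlue.

(* Spatial Markov property: given the cycle O of a, the rest of the permutation
   is distributed as the random permutation on W :\: O. The pairs (p, s) are
   exchanged by the weight-preserving involution h below. *)
Lemma Exp_cycle_decomposition W a F : a \in W ->
  Exp e alpha W F = \sum_(p | admissible e W p) pmass W p *
    Exp e alpha (W :\: porbit p a) (F \o glue (porbit p a) p).
Proof.
move=> aW.
pose P (u : {perm T} * {perm T}) :=
  admissible e W u.1 && admissible e (W :\: porbit u.1 a) u.2.
pose h (u : {perm T} * {perm T}) :=
  (glue (porbit u.1 a) u.1 u.2, glue (porbit u.1 a) 1%g u.1).
have hP u : P u -> P (h u) /\ h (h u) = u.
  case: u => p s /andP /= [pW sa]; rewrite /P /h /= (porbit_glue_cycle sa).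
  have [-> ->] := glue_cycle_involutive sa.
  by rewrite admissible_glue_cycle // admissible_glue1_cycle.
rewrite ExpE; under [RHS]eq_bigr => p _ do rewrite ExpE mulr_sumr.
rewrite pair_big_dep (reindex_onto h h); last by move=> u /hP [].
rewrite (eq_bigl P); last first.
  move=> u; apply/andP/idP => [[/hP [Phhu _] /eqP hhu] | Pu]; first by rewrite -hhu.
  by have [Phu ->] := hP _ Pu; rewrite eqxx.
rewrite (eq_bigr (fun u => pmass W u.1 * F u.1 * pmass (W :\: porbit u.1 a) u.2)); last first.
  case=> p s /andP /= [pW sa]; rewrite (porbit_glue_cycle sa).
  have [-> _] := glue_cycle_involutive sa.
  by rewrite mulrA -(pmass_glue_cycle aW pW sa) mulrAC.
rewrite -(pair_big_dep (admissible e W) (fun p s => admissible e (W :\: porbit p a) s)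
  (fun p s => pmass W p * F p * pmass (W :\: porbit p a) s)) /=.
by apply: eq_bigr => p _; rewrite -mulr_sumr sum_pmass mulr1.
Qed.

End GibbsMeasure.

Section Connectivity.
Variables (T : finType) (e : rel T).

Definition induced (Y : {set T}) : rel T := [rel u v | [&& u \in Y, v \in Y & e u v]].

Definition connected_from (x : T) (Y : {set T}) :=
  x \in Y /\ forall y, y \in Y -> connect (induced Y) x y.

Lemma connect_induced_subset (Y Y' : {set T}) u v : Y \subset Y' ->
  connect (induced Y) u v -> connect (induced Y') u v.
Proof.
move=> sY; apply: connect_sub => s t /and3P [sY' tY' st].
by apply: connect1; rewrite /induced /= (fintype.subsetP sY _ sY') (fintype.subsetP sY _ tY').
Qed.

Lemma connected_from_setU_porbit x (X : {set T}) (p : {perm T}) a :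
  connected_from x X -> a \in X -> [forall y, (p y == y) || e y (p y)] ->
  connected_from x (X :|: porbit p a).
Proof.
move=> [xX cX] aX /forallP pe; have sX := finset.subsetUl X (porbit p a).
split=> [|y]; first by rewrite inE xX.
rewrite inE => /orP [/cX /(connect_induced_subset sX) //|/porbitP [i ->]].
apply: connect_trans (connect_induced_subset sX (cX a aX)) _.
elim: i => [|i IH]; first by rewrite expg0 perm1 connect0.
apply: connect_trans IH _; rewrite expgSr permM.
case/orP: (pe ((p ^+ i)%g a)) => [/eqP -> //|pei].
by apply: connect1; rewrite /induced /= !inE pei -permM -expgSr !mem_porbit !orbT.
Qed.

Lemma connected_from_reach x (Y B : {set T}) b : connected_from x Y -> b \in Y -> b \in B ->
  exists2 n, (n < #|Y|)%N & reach e B x n.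
Proof.
move=> [xY cY] bY bB; have /connectP [s ps bl] := cY b bY.
case: (shortenP ps) bl => s' ps' us' _ bl.
have pathY z t : path (induced Y) z t -> {subset t <= Y}.
  elim: t z => [|w t IH] z //= /andP [/and3P [_ wY _] pt] y.
  by rewrite inE => /orP [/eqP -> //|]; apply: IH pt y.
have s'Y : {subset x :: s' <= Y}.
  by move=> y; rewrite inE => /orP [/eqP -> //|]; apply: pathY ps' y.
exists (size s'); first by rewrite cardE; apply: (uniq_leq_size us') => y /s'Y; rewrite mem_enum.
apply/existsP; exists (in_tuple s'); rewrite /= -bl bB andbT.
by apply: sub_path ps' => u v /and3P [].
Qed.

End Connectivity.

Section ProbabilitySeries.
Variables (R : realType) (p : nat -> R).
Hypothesis p_ge0 : forall k, 0 <= p k.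
Hypothesis p_mass : (\sum_(0 <= k <oo) (p k)%:E = 1%:E)%E.

Lemma sum_head_add_le1 l (P : R) : (P%:E <= \sum_(l <= k <oo) (p k)%:E)%E ->
  \sum_(k < l) p k + P <= 1.
Proof.
move=> hP; have := @nneseries_split R (fun k => (p k)%:E) 0 l (fun k _ => p_ge0 k).
rewrite p_mass add0n sumEFin big_mkord => mass_split.
by rewrite -lee_fin mass_split EFinD leeD2l.
Qed.

Lemma sum_head_le1 n : \sum_(k < n) p k <= 1.
Proof.
rewrite -[X in X <= _]addr0; apply: sum_head_add_le1.
by apply: nneseries_ge0 => k _ _; rewrite lee_fin.
Qed.

End ProbabilitySeries.

Section CycleDomination.
Variables (R : realType) (T : finType) (e : rel T) (alpha : R) (q : nat -> R).
Hypothesis q_ge0 : forall a, 0 <= q a.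

(* The hypothesis says that #|porbit pi a| - 1 is stochastically dominated by
   an integer variable of law q (possibly defective). *)
Lemma sum_law_le_Exp_cycle (W : {set T}) (a : T) (phi : nat -> R) N :
  (forall l, \sum_(y < l.+1) q y +
      Prob e alpha W (fun pi => (l.+2 <= #|porbit pi a|)%N) <= 1) ->
  (forall y, 0 <= phi y) -> (forall y, phi y.+1 <= phi y) ->
  \sum_(y < N.+1) q y * phi y <=
  \sum_(pi | admissible e W pi) pmass e alpha W pi * phi #|porbit pi a|.-1.
Proof.
move=> q_tail phi0 phiS; pose M := maxn N #|T|.
pose v y := \sum_(pi | admissible e W pi)
  pmass e alpha W pi * (y == #|porbit pi a|.-1 :> nat)%:R.
apply: le_trans (_ : \sum_(y < M.+1) q y * phi y <= _).
  apply: (@ler_sum_ord_widen _ N.+1 M.+1 (fun y => q y * phi y)) => [|i].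
    by rewrite ltnS leq_maxl.
  by rewrite mulr_ge0.
apply: le_trans (_ : \sum_(y < M.+1) v y * phi y <= _).
  apply: ler_sum_antitone => // l.
  rewrite -(lerD2r (Prob e alpha W (fun pi => (l.+2 <= #|porbit pi a|)%N))).
  apply: le_trans (q_tail l) _; rewrite /Prob ExpE exchange_big -big_split /=.
  rewrite -[X in X <= _](sum_pmass e alpha W); apply: ler_sum => pi _.
  rewrite -mulr_sumr -mulrDr sum_ord_indicator1 -[X in X <= _]mulr1 ler_wpM2l ?pmass_ge0 //.
  case: #|porbit pi a| (card_porbit_neq0 pi a) => [//|k] _.
  by rewrite /= ltnS ltnS; case: leqP; rewrite ?addr0 ?add0r.
rewrite /v; under eq_bigr do rewrite mulr_suml.
rewrite exchange_big /=; apply: ler_sum => pi _.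
have OM : (#|porbit pi a|.-1 < M.+1)%N.
  by rewrite ltnS (leq_trans (leq_pred _)) // (leq_trans (max_card _)) ?leq_maxr.
by under eq_bigr do rewrite -mulrA; rewrite -mulr_sumr sum_ord_indicator OM mul1r.
Qed.

End CycleDomination.

Section Exploration.
Variables (R : realType) (T : finType) (e : rel T) (alpha : R) (q : nat -> R).
Hypothesis q_ge0 : forall a, 0 <= q a.
Hypothesis q_le1 : forall N, \sum_(a < N) q a <= 1.
Hypothesis cycle_tail : forall (W : {set T}) a, a \in W -> forall l,
  \sum_(y < l.+1) q y + Prob e alpha W (fun pi => (l.+2 <= #|porbit pi a|)%N) <= 1.
Variables (B : {set T}) (f : {perm T} -> R) (D : nat) (x : T).
Hypothesis f_meas : FB_measurable e B f.
Hypothesis far_from_B : forall Y : {set T},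
  connected_from e x Y -> (exists2 b, b \in Y & b \in B) -> (D < #|Y|)%N.

Local Notation S := (supnorm e f).
Local Notation E W := (Exp e alpha W f).
Local Notation bound k r n s := (2 * S * (1 - small_total_avg q D k r n s)).

Lemma bound_ge0 k r n s : 0 <= bound k r n s.
Proof. by rewrite !mulr_ge0 ?supnorm_ge0 // subr_ge0 small_total_avg_le1. Qed.

Lemma ler_norm_Exp_sub W W' : `|E W - E W'| <= 2 * S.
Proof.
apply: le_trans (ler_normB _ _) _.
by rewrite mulr2n mulrDl mul1r lerD ?ler_norm_Exp_supnorm.
Qed.

(* State of the exploration of the cluster X of x: the domains W and
   (W :\: Rr) :|: N differ exactly on Rr :|: N, which lies in X; the vertices of Rr
   are those whose cycle has not been revealed yet. *)
Definition explore_state (W Rr N X : {set T}) :=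
  [/\ Rr \subset W, [disjoint N & W], X :&: W = Rr, N \subset X & connected_from e x X].

(* The last size condition ensures that the k generations granted to the
   Galton-Watson comparison are never exhausted: every revealed cycle decreases
   #|W| + #|N|. *)
Definition explore_bound_at k m := forall W Rr N X : {set T}, explore_state W Rr N X ->
  (#|W| + #|N| <= m)%N -> (#|W| + #|N| <= k + (Rr != finset.set0))%N ->
  `|E W - E ((W :\: Rr) :|: N)| <= bound k #|Rr| #|N| #|X|.

Lemma explore_bound_trivial k (W X : {set T}) :
  `|E W - E ((W :\: finset.set0) :|: finset.set0)| <= bound k 0 0 #|X|.
Proof. by rewrite finset.setD0 finset.setU0 subrr normr0 bound_ge0. Qed.

Section CycleStep.
Variables (W Rr N X : {set T}) (a : T) (p : {perm T}).
Hypotheses (st : explore_state W Rr N X) (aR : a \in Rr) (pW : admissible e W p).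
Local Notation O := (porbit p a).

Lemma explore_cycle_root_mem : a \in W.
Proof. by case: st => RW _ _ _ _; apply: (fintype.subsetP RW). Qed.

Lemma explore_state_cycle : explore_state (W :\: O) (Rr :\: O) (N :|: (O :\: Rr)) (X :|: O).
Proof.
have [RW dNW XW NX cX] := st; have OW := porbit_subW explore_cycle_root_mem pW.
have NWF y : y \in N -> (y \in W) = false by move=> yN; apply: disjointFr dNW yN.
split.
- exact: finset.setSD RW.
- rewrite -setI_eq0; apply/eqP/setP => y; rewrite !inE.
  case: (boolP (y \in N)) => [/NWF -> | _]; first by rewrite andbF.
  by case: (y \in O); rewrite /= ?andbF.
- apply/setP => y; rewrite !inE -XW inE.
  by case: (boolP (y \in O)); rewrite ?andbF ?orbF //= orbT andbT => /(fintype.subsetP OW).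
- by apply: finset.setUSS; rewrite ?finset.subsetDl // finset.subsetUr.
- apply: connected_from_setU_porbit cX _ _; last by case/andP: pW.
  by move: aR; rewrite -XW inE => /andP [].
Qed.

Lemma explore_target_cycle :
  (W :\: Rr) :|: N = ((W :\: O) :\: (Rr :\: O)) :|: (N :|: (O :\: Rr)).
Proof.
have OW := porbit_subW explore_cycle_root_mem pW.
apply/setP => y; rewrite !inE; case: (boolP (y \in O)) => [/(fintype.subsetP OW) -> | _] /=.
  by case: (y \in Rr); case: (y \in N).
by case: (y \in Rr); case: (y \in N); case: (y \in W).
Qed.

Lemma explore_cards_cycle :
  [/\ (#|W :\: O| + #|N :|: (O :\: Rr)| < #|W| + #|N|)%N, (#|Rr :\: O| <= #|Rr|.-1)%N,
      (#|N :|: (O :\: Rr)| <= #|N| + #|O|.-1)%N & (#|X :|: O| <= #|X| + #|O|.-1)%N].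
Proof.
have [RW _ XW _ _] := st; have OW := porbit_subW explore_cycle_root_mem pW.
have aOR : (0 < #|O :&: Rr|)%N by apply/card_gt0P; exists a; rewrite inE porbit_id aR.
have cOR : (#|O :\: Rr| <= #|O|.-1)%N by rewrite cardsD; lia.
have cRO : (#|Rr :\: O| <= #|Rr|.-1)%N by rewrite cardsD finset.setIC; lia.
have cNO := cardsUI N (O :\: Rr).
have cXO : (#|X :|: O| <= #|X| + #|O :\: Rr|)%N.
  have -> : X :|: O = X :|: (O :\: Rr).
    apply/setP => y; rewrite !inE; case: (boolP (y \in Rr)) => // yR.
    by rewrite [y \in X](_ : _ = true) //; move: yR; rewrite -XW inE => /andP [].
  by have := cardsUI X (O :\: Rr); lia.
have cWO : (#|W :\: O| + #|O| = #|W|)%N by rewrite cardsD (finset.setIidPr OW) subnK ?subset_leq_card.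
have O_gt0 : (0 < #|O|)%N by rewrite lt0n card_porbit_neq0.
by split; lia.
Qed.

End CycleStep.

Lemma Exp_glue_cycle_disjoint (W : {set T}) a p : admissible e W p ->
  [disjoint porbit p a & B] ->
  Exp e alpha (W :\: porbit p a) (f \o glue (porbit p a) p) = E (W :\: porbit p a).
Proof.
move=> pW dOB; rewrite !ExpE; apply: eq_bigr => s sa /=; congr (_ * _).
apply: f_meas; [exact/admissibleT/(admissible_glue_cycle pW sa) | exact: admissibleT sa |].
move=> b bB; have bO : (b \in porbit p a) = false.
  by apply: disjointFr bB; rewrite disjoint_sym.
split; first by rewrite (glue_cycleE sa) bO.
have sbO : ((s^-1)%g b \in porbit p a) = false.
  apply: contraFF bO => sbO; have := admissible_fix_cycle sa sbO.
  by rewrite permKV => ->.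
by apply: (@perm_inj _ (glue (porbit p a) p s)); rewrite permKV (glue_cycleE sa) sbO permKV.
Qed.

Lemma explore_cycle_step k m W Rr N X a p : explore_bound_at k m ->
  explore_state W Rr N X -> a \in Rr ->
  (#|W| + #|N| <= m.+1)%N -> (#|W| + #|N| <= k.+1)%N -> admissible e W p ->
  `|Exp e alpha (W :\: porbit p a) (f \o glue (porbit p a) p) - E ((W :\: Rr) :|: N)|
    <= bound k #|Rr|.-1 (#|N| + #|porbit p a|.-1) (#|X| + #|porbit p a|.-1).
Proof.
move=> IH st aR hm hk pW; set O := porbit p a.
have [cW cR cN cX] := explore_cards_cycle st aR pW.
have st' := explore_state_cycle st aR pW.
case: (boolP [disjoint O & B]) => dOB.
  rewrite Exp_glue_cycle_disjoint // (explore_target_cycle st aR pW).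
  apply: le_trans (IH _ _ _ _ st' _ _) _.
  - by lia.
  - by apply: (leq_trans _ (leq_addr _ _)); lia.
  - rewrite ler_wpM2l ?mulr_ge0 ?supnorm_ge0 // lerD2l lerN2.
    by apply: small_total_avg_le => //; rewrite leq_add2l.
have [b bO bB] : exists2 b, b \in O & b \in B.
  by move: dOB; rewrite -setI_eq0 => /set0Pn [b]; rewrite inE => /andP []; exists b.
have [_ _ _ _ cXO] := st'.
have DX : (D < #|X| + #|O|.-1)%N.
  apply: leq_trans cX; apply: far_from_B cXO _.
  by exists b; rewrite // inE bO orbT.
rewrite small_total_avg_eq0 // subr0 mulr1.
apply: le_trans (ler_normB _ _) _; rewrite mulr2n mulrDl mul1r lerD ?ler_norm_Exp_supnorm //.
apply: ler_norm_Exp => s sa /=; apply: ler_supnorm.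
exact/admissibleT/(admissible_glue_cycle pW sa).
Qed.

Lemma explore_generation k m W Rr N X : explore_bound_at k m ->
  explore_state W Rr N X -> Rr != finset.set0 ->
  (#|W| + #|N| <= m.+1)%N -> (#|W| + #|N| <= k.+1)%N ->
  `|E W - E ((W :\: Rr) :|: N)| <= bound k #|Rr| #|N| #|X|.
Proof.
move=> IH st /set0Pn [a aR] hm hk; have aW := explore_cycle_root_mem st aR.
set M := (W :\: Rr) :|: N.
pose phi y := small_total_avg q D k #|Rr|.-1 (#|N| + y) (#|X| + y).
pose Epi pi := Exp e alpha (W :\: porbit pi a) (f \o glue (porbit pi a) pi).
have -> : E W - E M = \sum_(pi | admissible e W pi) pmass e alpha W pi * (Epi pi - E M).
  rewrite (Exp_cycle_decomposition e alpha f aW) -[E M]mul1r -[in X in _ - X * _](sum_pmass e alpha W).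
  by rewrite mulr_suml -sumrB; apply: eq_bigr => pi _; rewrite mul1r mulrBr.
apply: le_trans (ler_norm_sum _ _ _) _.
apply: le_trans (_ : \sum_(pi | admissible e W pi)
    pmass e alpha W pi * (2 * S * (1 - phi #|porbit pi a|.-1)) <= _).
  apply: ler_sum => pi pW; rewrite normrM ger0_norm ?pmass_ge0 // ler_wpM2l ?pmass_ge0 //.
  exact: explore_cycle_step IH st aR hm hk pW.
have -> : \sum_(pi | admissible e W pi) pmass e alpha W pi * (2 * S * (1 - phi #|porbit pi a|.-1))
    = 2 * S * (1 - \sum_(pi | admissible e W pi) pmass e alpha W pi * phi #|porbit pi a|.-1).
  rewrite mulrBr mulr1 -[X in X - _](mulr1 (2 * S)) -[X in 2 * S * X - _](sum_pmass e alpha W).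
  by rewrite !mulr_sumr -sumrB; apply: eq_bigr => pi _; ring.
rewrite ler_wpM2l ?mulr_ge0 ?supnorm_ge0 // lerD2l lerN2.
apply: le_trans (sum_law_le_Exp_cycle q_ge0 D (cycle_tail aW) _ _) => [|y|y].
- have -> : #|Rr| = (#|Rr|.-1).+1 by rewrite prednK // card_gt0; apply/set0Pn; exists a.
  exact: small_total_avgS_le.
- exact: small_total_avg_ge0.
- by apply: small_total_avg_le; rewrite ?addnS.
Qed.

Lemma explore_next_generation k m W N X : explore_bound_at k m ->
  explore_state W finset.set0 N X -> N != finset.set0 ->
  (#|W| + #|N| <= m.+1)%N -> (#|W| + #|N| <= k.+1)%N ->
  `|E W - E ((W :\: finset.set0) :|: N)| <= bound k.+1 0 #|N| #|X|.
Proof.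
move=> IH [_ dNW XW NX cX] N0 hm hk.
have st : explore_state (W :|: N) N finset.set0 X.
  split=> //; [exact: finset.subsetUr | by rewrite -setI_eq0 finset.set0I | | exact: finset.sub0set].
  by rewrite finset.setIUr XW finset.set0U; apply/finset.setIidPr.
have cWN : #|W :|: N| = (#|W| + #|N|)%N.
  by rewrite cardsU finset.setIC (disjoint_setI0 dNW) cards0 subn0.
have := explore_generation IH st N0; rewrite cWN cards0 addn0 => /(_ hm hk).
have -> : (W :|: N) :\: N :|: finset.set0 = W.
  rewrite finset.setU0 finset.setDUl finset.setDv finset.setU0.
  by apply/finset.setDidPl; rewrite disjoint_sym.
rewrite distrC finset.setD0 small_total_avgS0.
case: (leqP #|X| D) => _; rewrite ?mul1r // mul0r subr0 mulr1 => _.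
exact: ler_norm_Exp_sub.
Qed.

Lemma explore_bound k m : explore_bound_at k m.
Proof.
elim: m k => [|m IHm] k W Rr N X st hm hk.
  have [RW _ _ _ _] := st.
  have N0 : N = finset.set0 by apply: cards0_eq; lia.
  have W0 : W = finset.set0 by apply: cards0_eq; lia.
  have R0 : Rr = finset.set0 by apply/eqP; rewrite -finset.subset0 -W0.
  by rewrite N0 R0 cards0 explore_bound_trivial.
have [R0 | R0] := eqVneq Rr finset.set0; last first.
  by rewrite R0 addn1 in hk; apply: explore_generation (IHm k) st R0 hm hk.
move: st hk; rewrite R0 eqxx addn0 => st hk.
have [N0 | N0] := eqVneq N finset.set0; first by rewrite N0 cards0 explore_bound_trivial.
case: k hk => [|k] hk.
  by move: hk; rewrite leqn0 addn_eq0 !cards_eq0 (negbTE N0) andbF.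
by rewrite cards0; apply: explore_next_generation (IHm k) st N0 hm hk.
Qed.

Lemma Exp_remove_vertex_le (W : {set T}) : x \in W -> `|E W - E (W :\ x)| <= bound #|T| 1 0 1.
Proof.
move=> xW; have st : explore_state W [set x] finset.set0 [set x].
  split; [by rewrite finset.sub1set | by rewrite -setI_eq0 finset.set0I | | exact: finset.sub0set |].
  - by apply/setP => y; rewrite !inE; case: eqP => // ->.
  - by split=> [|y]; rewrite ?inE // => /eqP ->; apply: connect0.
have := explore_bound st (leqnn _); rewrite cards0 cards1 addn0 finset.setU0; apply.
by rewrite (leq_trans (max_card _)) ?leq_addr.
Qed.

End Exploration.

Lemma ler0_expR_decay (R : realType) (t K c : R) : 0 < c ->
  (forall n : nat, t <= K * expR (- c * n%:R)) -> t <= 0.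
Proof.
move=> c_gt0 tK; rewrite leNgt; apply/negP => t_gt0.
have K_gt0 : 0 < K by have := tK 0%N; rewrite mulr0 expR0 mulr1; apply: lt_le_trans.
pose n := Num.Def.archi_bound (K / (c * t)).
have Kn : K < n%:R * (c * t).
  by rewrite -ltr_pdivrMr ?mulr_gt0 // archi_boundP // divr_ge0 // ltW ?mulr_gt0.
have tn : t * expR (c * n%:R) <= K by rewrite -ler_pdivlMr ?expR_gt0 // -expRN -mulNr.
have := expR_ge1Dx (c * n%:R); nra.
Qed.

Section Telescope.
Variables (R : realType) (T : finType) (g : T -> R) (F : {set T} -> R).
Hypothesis F_remove : forall (W : {set T}) y, y \in W -> `|F W - F (W :\ y)| <= g y.

Lemma ler_norm_sub_setU (U S : {set T}) : S \subset ~: U ->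
  `|F (U :|: S) - F U| <= \sum_(y in S) g y.
Proof.
elim: {S}_.+1 {-2}S (ltnSn #|S|) => // n IH S Sn SU.
have [->|[y yS]] := set_0Vmem S; first by rewrite finset.setU0 subrr normr0 big_set0.
have yU : y \notin U by have := fintype.subsetP SU y yS; rewrite inE.
have USy : (U :|: S) :\ y = U :|: (S :\ y).
  by apply/setP => i; rewrite !inE; case: eqVneq => // ->; rewrite (negbTE yU).
rewrite (big_setD1 y yS) -[F _ - F U](subrKA (F (U :|: (S :\ y)))) -USy.
apply: le_trans (ler_normD _ _) _; rewrite lerD ?F_remove ?inE ?yS ?orbT //.
rewrite USy IH //; first by rewrite -ltnS (leq_trans _ Sn) // (cardsD1 y S) yS.
by apply: fintype.subset_trans SU; apply: finset.subsetDl.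
Qed.

End Telescope.

Section VertexRemoval.
Variables (R : realType) (T : finType) (e : rel T) (alpha : R) (p : nat -> R).
Hypothesis p_ge0 : forall k, 0 <= p k.
Hypothesis p_mass : (\sum_(0 <= k <oo) (p k)%:E = 1%:E)%E.
Hypothesis p0 : p 0%N = 0.
Hypothesis cycle_bound : forall (l : nat), (0 < l)%N ->
  forall (U' : {set T}) (x : T), x \in U' ->
    ((Prob e alpha U' (fun pi => (l <= #|porbit pi x|)%N))%:E
       <= \sum_(l <= k <oo) (p k)%:E)%E.
Variables (C kappa : R).
Hypotheses (C_gt0 : 0 < C) (kappa_gt0 : 0 < kappa).
Hypothesis gw_tail : forall m n : nat,
  gw_partial_total_gt (fun k => p k.+1) m n <= C * expR (- (2 * kappa) * n%:R).
Variables (B : {set T}) (f : {perm T} -> R).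
Hypothesis f_meas : FB_measurable e B f.

Local Notation q := (fun k => p k.+1).
Local Notation S := (supnorm e f).
Local Notation E W := (Exp e alpha W f).

Lemma shifted_law_le1 N : \sum_(a < N) q a <= 1.
Proof. by apply: le_trans (sum_head_le1 p_ge0 p_mass N.+1); rewrite big_ord_recl p0 add0r. Qed.

Lemma cycle_tail_le1 (W : {set T}) a : a \in W -> forall l,
  \sum_(y < l.+1) q y + Prob e alpha W (fun pi => (l.+2 <= #|porbit pi a|)%N) <= 1.
Proof.
move=> aW l; have := sum_head_add_le1 p_ge0 p_mass (cycle_bound (isT : 0 < l.+2)%N aW).
by rewrite big_ord_recl p0 add0r.
Qed.

Lemma Exp_remove_vertex_le_expR (W : {set T}) y D : y \in W ->
  (forall Y, connected_from e y Y -> (exists2 b, b \in Y & b \in B) -> (D < #|Y|)%N) ->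
  `|E W - E (W :\ y)| <= 2 * S * (C * expR (- (2 * kappa) * D%:R)).
Proof.
move=> yW far; have q_ge0 a : 0 <= q a by [].
apply: le_trans (Exp_remove_vertex_le q_ge0 shifted_law_le1 cycle_tail_le1 f_meas far yW) _.
rewrite ler_wpM2l ?mulr_ge0 ?supnorm_ge0 //.
exact: le_trans (small_total_avg_gw_tail q_ge0 shifted_law_le1 _ _) (gw_tail _ _).
Qed.

Lemma Exp_remove_vertex_le_decay (W : {set T}) y : y \in W ->
  `|E W - E (W :\ y)| <= 2 * C * S * decay e kappa B y.
Proof.
move=> yW; rewrite /decay; case: pselect => [reachable | unreachable].
  case: ex_minnP => D _ minD.
  apply: le_trans (Exp_remove_vertex_le_expR (D := D) yW _) _.
    move=> Y cY [b bY bB]; have [n nY rn] := connected_from_reach cY bY bB.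
    exact: leq_ltn_trans (minD n rn) nY.
  rewrite mulrA [2 * S * C]mulrAC; apply: ler_wpM2l.
    by rewrite !mulr_ge0 ?supnorm_ge0 // ltW.
  by rewrite ler_expR !mulNr lerN2 ler_wpM2r // ler_pMl // ler1n.
rewrite mulr0; apply: (@ler0_expR_decay _ _ (2 * S * C) (2 * kappa)) => [|D].
  by rewrite mulr_gt0.
rewrite -mulrA; apply: Exp_remove_vertex_le_expR yW _ => Y cY [b bY bB].
by have [n _ rn] := connected_from_reach cY bY bB; case: unreachable; exists n.
Qed.

End VertexRemoval.

Theorem proposition4p10 (R : realType) (T : finType) (e : rel T)
  (e_sym : symmetric e) (e_irr : irreflexive e) (alpha : R)
  (U B : {set T}) (BU : B \subset U)
  (p : nat -> R) (* law of xi : P(xi = k) = p k *)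
  (p_ge0 : forall k, 0 <= p k)
  (p_mass : (\sum_(0 <= k <oo) (p k)%:E = 1%:E)%E)
  (p0 : p 0%N = 0)
  (p_mean : (\sum_(0 <= k <oo) ((k%:R * p k)%:E) < 2%:E)%E)
  (cycle_bound : forall (l : nat), (0 < l)%N ->
     forall (U' : {set T}) (x : T), x \in U' ->
       ((Prob e alpha U' (fun pi => (l <= #|porbit pi x|)%N))%:E
          <= \sum_(l <= k <oo) (p k)%:E)%E)
  (C kappa : R) (C_gt0 : 0 < C) (kappa_gt0 : 0 < kappa)
  (gw_tail : forall m n : nat,
     gw_partial_total_gt (fun k => p k.+1) m n
       <= C * expR (- (2 * kappa) * n%:R))
  (f : {perm T} -> R) (f_meas : FB_measurable e B f) :
  `| Exp e alpha [set: T] f - Exp e alpha U f |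
    <= 2 * C * supnorm e f * \sum_(x in ~: U) decay e kappa B x.
Proof.
have remove_vertex := Exp_remove_vertex_le_decay p_ge0 p_mass p0 cycle_bound
  C_gt0 kappa_gt0 gw_tail f_meas.
have := ler_norm_sub_setU remove_vertex (fintype.subxx (~: U)).
by rewrite finset.setUCr -mulr_sumr.
Qed.
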